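(* Let $\alpha\in[0,\pi/2)$, $A\in\Pi^n_{s,\alpha}$ and $q\in\mathbb{C}$ with $|q|\le1$. Then (a) $w_q(A)\le\left(\sqrt{(1-|q|^2)(1+2\sin^2(\alpha))}+|q|\right)w(A)$, and (b) $w_q(A)\le\sqrt{1+\sin^2(\alpha)}\,w(A)$.
   Context: $M_n$ is the algebra of complex $n\times n$ matrices. $W(A)=\{\langle Ax,x\rangle:\|x\|=1\}$ and $w(A)=\sup\{|z|:z\in W(A)\}$. For $|q|\le1$, $w_q(A)=\sup\{|\langle Ax,y\rangle|: \|x\|=\|y\|=1,\ \langle x,y\rangle=q\}$. $S_\alpha=\{z:\operatorname{Re}z>0,\ |\operatorname{Im}z|\le\tan(\alpha)\operatorname{Re}z\}$ and $\Pi^n_{s,\alpha}=\{A\in M_n: W(A)\subseteq S_\alpha\}$. *)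

From HB Require Import structures.
From mathcomp Require Import all_boot all_order all_algebra.
From mathcomp Require Import complex.
From mathcomp Require Import all_classical all_reals.
From mathcomp Require Import trigo.
Set Implicit Arguments. Unset Strict Implicit. Unset Printing Implicit Defensive.
Import Order.TTheory GRing.Theory Num.Theory.
Local Open Scope ring_scope.
Local Open Scope classical_set_scope.

Section Defs.
Variable R : realType.
Local Notation C := R[i].

Definition cinner (n : nat) (x y : 'cV[C]_n) : C :=
  \sum_(i < n) x i ord0 * conjc (y i ord0).

Definition cabs (z : C) : R := ComplexField.Normc.normc z.

Definition unit_vec (n : nat) (x : 'cV[C]_n) : Prop := cinner x x = 1.

Definition numrange (n : nat) (A : 'M[C]_n) : set C :=
  [set z | exists x : 'cV[C]_n, unit_vec x /\ z = cinner (A *m x) x].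

Definition numradius (n : nat) (A : 'M[C]_n) : R :=
  sup [set r | exists2 z, numrange A z & r = cabs z].

Definition qnumradius (n : nat) (q : C) (A : 'M[C]_n) : R :=
  sup [set r | exists x y : 'cV[C]_n,
         [/\ unit_vec x, unit_vec y, cinner x y = q & r = cabs (cinner (A *m x) y)]].

Definition sector (alpha : R) : set C :=
  [set z | 0 < complex.Re z /\ `|complex.Im z| <= tan alpha * complex.Re z].

Definition sectorial (n : nat) (alpha : R) (A : 'M[C]_n) : Prop :=
  numrange A `<=` sector alpha.

End Defs.

From HB Require Import structures.
From mathcomp Require Import all_boot all_order all_algebra.
From mathcomp Require Import complex.
From mathcomp Require Import all_classical all_reals.
From mathcomp Require Import trigo.
From mathcomp Require Import ring lra.
Import Order.TTheory GRing.Theory Num.Theory.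
Set Implicit Arguments. Unset Strict Implicit.
Local Open Scope ring_scope.
Local Open Scope classical_set_scope.
Local Open Scope complex_scope.

(* Let f v = <A v, v>, w = w(A), s = sin alpha, c = cos alpha. Sectoriality and the
   definition of w give, for every vector v, c |Im f v| <= s Re f v and |f v| <= w |v|^2.
   Evaluating the second bound at k u1 +- i u2 and the first at k r u1 + (1 +- i s c) u2,
   where k = sqrt (1 + s^2) and r = sqrt (1 + s^2 c^2), and adding suitable multiples
   gives 0 <= k^2 w |u1|^2 + w |u2|^2 + 2 Re <A u1, u2>. Taking u1 = l x and u2 = -t y
   with t the phase of <A x, y> and optimizing over l yields
   |<A x, y>| <= k w |x| |y|, which is (b). For (a), write y = conj(q) x + (y - conj(q) x),
   where |y - conj(q) x|^2 = 1 - |q|^2, and bound |<A x, x>| by w. *)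

Lemma quadratic_ge0_discr (R : realFieldType) (a b m : R) :
  0 <= a -> (forall l, 2 * l * m <= a * l ^+ 2 + b) -> m ^+ 2 <= a * b.
Proof.
move=> a0 hl; have [a_gt0|a_le0] := ltP 0 a.
  have := hl (m / a).
  have -> : a * (m / a) ^+ 2 = m ^+ 2 / a by field; rewrite gt_eqF.
  have -> : 2 * (m / a) * m = 2 * (m ^+ 2 / a) by ring.
  by move=> h; rewrite -ler_pdivrMl //; lra.
have a_eq0 : a = 0 by apply/le_anti/andP.
rewrite a_eq0 in hl *.
have [->|m0] := eqVneq m 0; first by rewrite expr0n mul0r.
have := hl ((`|b| + 1) / (2 * m)).
have -> : 2 * ((`|b| + 1) / (2 * m)) * m = `|b| + 1 by field; rewrite m0.
by rewrite !mul0r add0r; have := ler_norm b; lra.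
Qed.

(* s times the first inequality plus 1/r times the second is s k times the conclusion,
   using s^2 + c^2 = 1. *)
Lemma cross_term_certificate (R : realFieldType) (s c k r w P Q b b' N1 N2 : R) :
  0 < s -> 0 < r -> 0 < k -> s ^+ 2 + c ^+ 2 = 1 ->
  r * (k ^+ 2 * P + Q) + k * s ^+ 2 * (b' - b) <= k * w * (k ^+ 2 * N1 + N2) ->
  0 <= r * (s * (k ^+ 2 * r * P + k * (b + b') + r * Q) - c ^+ 2 * k * s * (b' - b)) ->
  0 <= k ^+ 2 * w * N1 + w * N2 + 2 * b.
Proof.
move=> s_gt0 r_gt0 k_gt0 sc1 hI; rewrite pmulr_rge0 // => hII.
have c2 : c ^+ 2 = 1 - s ^+ 2 by rewrite -sc1 addrAC subrr add0r.
rewrite -(pmulr_rge0 _ (mulr_gt0 s_gt0 k_gt0)).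
have -> : s * k * (k ^+ 2 * w * N1 + w * N2 + 2 * b) =
    s * (k * w * (k ^+ 2 * N1 + N2) - (r * (k ^+ 2 * P + Q) + k * s ^+ 2 * (b' - b)))
    + (s * (k ^+ 2 * r * P + k * (b + b') + r * Q) - c ^+ 2 * k * s * (b' - b)).
  by rewrite c2; ring.
by rewrite addr_ge0 // mulr_ge0 ?subr_ge0 // ltW.
Qed.

Section ComplexParts.
Variable R : realType.
Local Notation Re := complex.Re.
Local Notation Im := complex.Im.
Implicit Types (a b : R) (x y z : R[i]).

Lemma ReD x y : Re (x + y) = Re x + Re y. Proof. by case: x => ? ?; case: y. Qed.

Lemma ImD x y : Im (x + y) = Im x + Im y. Proof. by case: x => ? ?; case: y. Qed.

Lemma ReN x : Re (- x) = - Re x. Proof. by case: x. Qed.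

Lemma ImN x : Im (- x) = - Im x. Proof. by case: x. Qed.

Lemma ReM x y : Re (x * y) = Re x * Re y - Im x * Im y.
Proof. by case: x => ? ?; case: y. Qed.

Lemma ImM x y : Im (x * y) = Re x * Im y + Im x * Re y.
Proof. by case: x => ? ?; case: y. Qed.

Lemma ReJ x : Re (conjc x) = Re x. Proof. by case: x. Qed.

Lemma ImJ x : Im (conjc x) = - Im x. Proof. by case: x. Qed.

Lemma cabsE z : cabs z = Num.sqrt (Re z ^+ 2 + Im z ^+ 2).
Proof. by case: z. Qed.

Lemma cabs_ge0 z : 0 <= cabs z.
Proof. by rewrite cabsE sqrtr_ge0. Qed.

Lemma cabs_real a : cabs a%:C = `|a|.
Proof. by rewrite cabsE /= expr0n addr0 sqrtr_sqr. Qed.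

Lemma Re_realM a z : Re (a%:C * z) = a * Re z.
Proof. by rewrite ReM /= mul0r subr0. Qed.

Lemma Im_realM a z : Im (a%:C * z) = a * Im z.
Proof. by rewrite ImM /= mul0r addr0. Qed.

Lemma cabs_realM a z : cabs (a%:C * z) = `|a| * cabs z.
Proof. by rewrite -cabs_real; apply: ComplexField.Normc.normcM. Qed.

Lemma Re_le_cabs z : Re z <= cabs z.
Proof. by rewrite -lecR; apply: le_trans (normc_ge_Re z); rewrite lecR ler_norm. Qed.

Lemma Re_Im_comb_le a b z :
  a * Re z + b * Im z <= Num.sqrt (a ^+ 2 + b ^+ 2) * cabs z.
Proof.
rewrite cabsE -sqrtrM ?addr_ge0 ?sqr_ge0 //.
apply: le_trans (ler_norm _) _; rewrite -sqrtr_sqr; apply: ler_wsqrtr.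
have -> : (a ^+ 2 + b ^+ 2) * (Re z ^+ 2 + Im z ^+ 2)
  = (a * Re z + b * Im z) ^+ 2 + (a * Im z - b * Re z) ^+ 2 by ring.
by rewrite lerDl sqr_ge0.
Qed.

Lemma cabs_phase z : exists2 t : R[i], t * conjc t = 1 & conjc t * z = (cabs z)%:C.
Proof.
have [->|z0] := eqVneq z 0.
  by exists 1; rewrite ?conjc1 ?mulr1 // mulr0 cabs_real normr0.
have nz : `|z| != 0 by rewrite normr_eq0.
have zJz : z * conjc z = `|z| ^+ 2 by rewrite sqr_normc.
have nJ : conjc `|z| = `|z| by rewrite [`|z|]normc_def conjc_real.
have tJ : conjc (z / `|z|) = conjc z / `|z| by rewrite -[in RHS]nJ -conjc_inv -rmorphM.
exists (z / `|z|); rewrite tJ.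
- by rewrite mulrACA zJz -invfM -expr2 divff // expf_neq0.
- by rewrite mulrAC [conjc z * z]mulrC zJz expr2 mulfK.
Qed.

End ComplexParts.

Section InnerProduct.
Variables (R : realType) (n : nat).
Local Notation Re := complex.Re.
Implicit Types (a : R[i]) (u v w : 'cV[R[i]]_n).

Lemma cinnerDl u v w : cinner (u + v) w = cinner u w + cinner v w.
Proof. by rewrite /cinner -big_split; apply: eq_bigr => i _; rewrite mxE mulrDl. Qed.

Lemma cinnerZl a u w : cinner (a *: u) w = a * cinner u w.
Proof. by rewrite /cinner mulr_sumr; apply: eq_bigr => i _; rewrite mxE mulrA. Qed.

Lemma cinnerDr u v w : cinner u (v + w) = cinner u v + cinner u w.
Proof.
by rewrite /cinner -big_split; apply: eq_bigr => i _; rewrite mxE rmorphD mulrDr.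
Qed.

Lemma cinnerZr a u w : cinner u (a *: w) = conjc a * cinner u w.
Proof.
by rewrite /cinner mulr_sumr; apply: eq_bigr => i _; rewrite mxE rmorphM /= mulrCA.
Qed.

Lemma cinnerC u v : cinner v u = conjc (cinner u v).
Proof.
by rewrite /cinner rmorph_sum; apply: eq_bigr => i _; rewrite rmorphM /= conjcK mulrC.
Qed.

Lemma cinner_self_ge0 u : 0 <= cinner u u.
Proof. by apply: sumr_ge0 => i _; apply: mulcJ_ge0. Qed.

Lemma cinner_self_eq0 u : cinner u u = 0 -> u = 0.
Proof.
move=> u0; apply/matrixP => i j; rewrite ord1 mxE.
have /eqP := psumr_eq0P (fun i _ => mulcJ_ge0 (u i 0)) u0 (i := i) isT.
by rewrite mulf_eq0 conjc_eq0 orbb => /eqP.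
Qed.

Definition sqnorm u : R := Re (cinner u u).

Lemma cinner_selfE u : cinner u u = (sqnorm u)%:C.
Proof.
by rewrite /sqnorm; have := ger0_Im (cinner_self_ge0 u); case: (cinner u u) => ? ? /= ->.
Qed.

Lemma sqnorm_ge0 u : 0 <= sqnorm u.
Proof. by rewrite -lecR -cinner_selfE cinner_self_ge0. Qed.

Lemma sqnorm_gt0 u : u != 0 -> 0 < sqnorm u.
Proof.
move=> u0; rewrite lt_def sqnorm_ge0 andbT; apply: contra_neq u0 => N0.
by apply: cinner_self_eq0; rewrite cinner_selfE N0.
Qed.

Lemma sqnormZ a u : sqnorm (a *: u) = Re (a * conjc a) * sqnorm u.
Proof. by rewrite /sqnorm cinnerZl cinnerZr mulrA cinner_selfE [LHS]ReM /= mulr0 subr0. Qed.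

Lemma unit_vec_sqnorm u : unit_vec u -> sqnorm u = 1.
Proof. by rewrite /unit_vec /sqnorm => ->. Qed.

Lemma sqnorm_sub_proj u v : unit_vec u ->
  sqnorm (v - conjc (cinner u v) *: u) = sqnorm v - cabs (cinner u v) ^+ 2.
Proof.
rewrite /unit_vec => uu; set q := cinner u v.
have qJq : q * conjc q = (cabs q ^+ 2)%:C by rewrite -sqr_normc rmorphXn.
rewrite /sqnorm -scaleNr !(cinnerDl, cinnerDr, cinnerZl, cinnerZr) uu.
rewrite [cinner v u]cinnerC -/q rmorphN /= conjcK.
rewrite (_ : _ + _ = cinner v v - q * conjc q); last by ring.
by rewrite qJq ReD ReN.
Qed.

End InnerProduct.

Section QuadraticForm.
Variables (R : realType) (n : nat) (A : 'M[R[i]]_n).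
Local Notation Re := complex.Re.
Local Notation Im := complex.Im.
Implicit Types (a : R) (d g : R[i]) (u v : 'cV[R[i]]_n).

Definition qform v := cinner (A *m v) v.

Lemma qformZ g v : qform (g *: v) = g * conjc g * qform v.
Proof. by rewrite /qform -scalemxAr cinnerZl cinnerZr mulrA. Qed.

Lemma qform0 : qform 0 = 0.
Proof. by have := qformZ 0 0; rewrite scale0r !mul0r. Qed.

Lemma qform_expand g d u v : qform (g *: u + d *: v) =
  g * conjc g * qform u + g * conjc d * cinner (A *m u) v
  + d * conjc g * cinner (A *m v) u + d * conjc d * qform v.
Proof. by rewrite /qform mulmxDr -!scalemxAr !(cinnerDl, cinnerDr, cinnerZl, cinnerZr); ring. Qed.

Lemma cinner_split u v :
  cinner (A *m u) v = cinner u v * qform u + cinner (A *m u) (v - conjc (cinner u v) *: u).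
Proof. by rewrite -scaleNr cinnerDr cinnerZr rmorphN /= conjcK /qform; ring. Qed.

Lemma qform_pair_Re a d u v :
  Re (qform (a%:C *: u + d *: v) + qform (a%:C *: u + conjc d *: v)) =
  2 * (a ^+ 2 * Re (qform u) + a * Re d * Re (cinner (A *m u) v + cinner (A *m v) u)
       + (Re d ^+ 2 + Im d ^+ 2) * Re (qform v)).
Proof. by rewrite !qform_expand !(ReD, ImD, ReM, ImM, ReJ, ImJ) /=; ring. Qed.

Lemma qform_pair_Im a d u v :
  Im (qform (a%:C *: u + d *: v) - qform (a%:C *: u + conjc d *: v)) =
  2 * a * Im d * Re (cinner (A *m v) u - cinner (A *m u) v).
Proof. by rewrite !qform_expand !(ReD, ImD, ReN, ImN, ReM, ImM, ReJ, ImJ) /=; ring. Qed.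

Lemma qform_normalize v :
  v = 0 \/ exists2 x, unit_vec x & qform v = (sqnorm v)%:C * qform x.
Proof.
have [->|v0] := eqVneq v 0; [by left | right].
have N0 := sqnorm_gt0 v0.
pose l := (Num.sqrt (sqnorm v))^-1.
have llN : l * l * sqnorm v = 1.
  by rewrite -invfM -expr2 sqr_sqrtr ?mulVf ?gt_eqF ?ltW.
exists (l%:C *: v).
  rewrite /unit_vec cinnerZl cinnerZr conjc_real cinner_selfE mulrA -!rmorphM /=.
  by rewrite llN.
by rewrite qformZ conjc_real !mulrA -!rmorphM /= -[_ * l * l]mulrA [_ * (l * l)]mulrC llN mul1r.
Qed.

End QuadraticForm.

Lemma sqnorm_pair (R : realType) (n : nat) (a : R) (d : R[i]) (u v : 'cV[R[i]]_n) :
  sqnorm (a%:C *: u + d *: v) + sqnorm (a%:C *: u + conjc d *: v) =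
  2 * (a ^+ 2 * sqnorm u + a * complex.Re d * complex.Re (cinner u v + cinner v u)
       + (complex.Re d ^+ 2 + complex.Im d ^+ 2) * sqnorm v).
Proof.
have sqnormE x : sqnorm x = complex.Re (qform 1%:M x) by rewrite /qform mul1mx.
by rewrite !sqnormE -ReD qform_pair_Re /qform !mul1mx.
Qed.

Section SectorialForm.
Variables (R : realType) (n : nat) (A : 'M[R[i]]_n) (s c w : R).
Local Notation Re := complex.Re.
Local Notation Im := complex.Im.
Local Notation f := (qform A).
Hypotheses (s_ge0 : 0 <= s) (c_gt0 : 0 < c) (sc1 : s ^+ 2 + c ^+ 2 = 1).
Hypothesis qform_sector : forall v, 0 <= Re (f v) /\ c * `|Im (f v)| <= s * Re (f v).
Hypothesis qform_bound : forall v, cabs (f v) <= w * sqnorm v.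

Lemma qform_sector_comb v e : `|e| = c -> 0 <= s * Re (f v) + e * Im (f v).
Proof.
move=> ec; have [_ hv] := qform_sector v.
have := ler_norm (- (e * Im (f v))); rewrite normrN normrM ec; lra.
Qed.

Lemma qform_norm_comb p q v : p ^+ 2 + q ^+ 2 = 1 + s ^+ 2 ->
  p * Re (f v) + q * Im (f v) <= Num.sqrt (1 + s ^+ 2) * w * sqnorm v.
Proof.
move=> pq; apply: le_trans (Re_Im_comb_le _ _ _) _; rewrite pq -mulrA.
by apply: ler_wpM2l; [exact: sqrtr_ge0 | exact: qform_bound].
Qed.

Lemma qform_pair_norm_le p q a d u v : p ^+ 2 + q ^+ 2 = 1 + s ^+ 2 ->
  p * Re (f (a%:C *: u + d *: v) + f (a%:C *: u + conjc d *: v))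
  + q * Im (f (a%:C *: u + d *: v) - f (a%:C *: u + conjc d *: v))
  <= Num.sqrt (1 + s ^+ 2) * w * (sqnorm (a%:C *: u + d *: v) + sqnorm (a%:C *: u + conjc d *: v)).
Proof.
move=> pq; rewrite ReD ImD ImN !mulrDr addrACA mulrN -mulNr.
by apply: lerD; apply: qform_norm_comb; rewrite ?sqrrN.
Qed.

Lemma qform_pair_sector a d u v :
  0 <= s * Re (f (a%:C *: u + d *: v) + f (a%:C *: u + conjc d *: v))
       - c * Im (f (a%:C *: u + d *: v) - f (a%:C *: u + conjc d *: v)).
Proof.
rewrite ReD ImD ImN !mulrDr opprD mulrN opprK addrACA -mulNr.
by apply: addr_ge0; apply: qform_sector_comb; rewrite ?normrN gtr0_norm.
Qed.

Lemma qform_cross_ge0_spos u1 u2 : 0 < s ->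
  0 <= (1 + s ^+ 2) * w * sqnorm u1 + w * sqnorm u2 + 2 * Re (cinner (A *m u1) u2).
Proof.
move=> s_gt0; pose k := Num.sqrt (1 + s ^+ 2); pose r := Num.sqrt (1 + s ^+ 2 * c ^+ 2).
have kk : k ^+ 2 = 1 + s ^+ 2 by rewrite sqr_sqrtr // addr_ge0 ?sqr_ge0.
have rr : r ^+ 2 = 1 + s ^+ 2 * c ^+ 2 by rewrite sqr_sqrtr // addr_ge0 // mulr_ge0 ?sqr_ge0.
have k_gt0 : 0 < k by rewrite sqrtr_gt0 ltr_pwDl ?sqr_ge0.
have r_gt0 : 0 < r by rewrite sqrtr_gt0 ltr_pwDl // mulr_ge0 ?sqr_ge0.
have c2 : c ^+ 2 = 1 - s ^+ 2 by rewrite -sc1 addrAC subrr add0r.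
have rs : r ^+ 2 + (s ^+ 2) ^+ 2 = 1 + s ^+ 2 by rewrite rr c2; ring.
have hI := qform_pair_norm_le k 'i u1 u2 rs.
have hII := qform_pair_sector (k * r) (1 +i* (s * c)) u1 u2.
rewrite qform_pair_Re qform_pair_Im sqnorm_pair /= -/k !(ReD, ReN) in hI.
rewrite qform_pair_Re qform_pair_Im /= !(ReD, ReN) expr1n [(s * c) ^+ 2]exprMn -rr in hII.
rewrite -kk; apply: (@cross_term_certificate _ s c k r w (Re (f u1)) (Re (f u2))
  (Re (cinner (A *m u1) u2)) (Re (cinner (A *m u2) u1)) (sqnorm u1) (sqnorm u2)) => //.
  by move: hI; lra.
by move: hII; lra.
Qed.

(* For s = 0 the form is real, so Re <A u2, u1> = Re <A u1, u2>, and
   0 <= Re f (u1 + u2) suffices. *)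
Lemma qform_cross_ge0_s0 u1 u2 : s = 0 ->
  0 <= (1 + s ^+ 2) * w * sqnorm u1 + w * sqnorm u2 + 2 * Re (cinner (A *m u1) u2).
Proof.
move=> s0; have Im0 v : Im (f v) = 0.
  have [_] := qform_sector v; rewrite s0 mul0r pmulr_rle0 // normr_le0.
  by move/eqP.
have hIm := qform_pair_Im A 1 'i u1 u2.
rewrite ImD ImN !Im0 /= subrr !ReD ReN in hIm.
have hRe : 0 <= Re (f (1%:C *: u1 + 1 *: u2) + f (1%:C *: u1 + conjc 1 *: u2)).
  by rewrite ReD addr_ge0 ?(qform_sector _).1.
rewrite qform_pair_Re /= !ReD in hRe.
have hP := le_trans (Re_le_cabs _) (qform_bound u1).
have hQ := le_trans (Re_le_cabs _) (qform_bound u2).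
rewrite s0 expr0n addr0 mul1r.
move: hIm hRe; lra.
Qed.

Lemma qform_cross_ge0 u1 u2 :
  0 <= (1 + s ^+ 2) * w * sqnorm u1 + w * sqnorm u2 + 2 * Re (cinner (A *m u1) u2).
Proof.
have [s0|s_gt0] := eqVneq s 0; first exact: qform_cross_ge0_s0.
by apply: qform_cross_ge0_spos; rewrite lt_def s_gt0.
Qed.

Hypothesis w_ge0 : 0 <= w.

Lemma cinner_le_sqnorms x y : cabs (cinner (A *m x) y) <=
  Num.sqrt (1 + s ^+ 2) * w * Num.sqrt (sqnorm x) * Num.sqrt (sqnorm y).
Proof.
have [t tJt tz] := cabs_phase (cinner (A *m x) y); set m := cabs _ in tz *.
have quad l : 2 * l * m <= (1 + s ^+ 2) * w * sqnorm x * l ^+ 2 + w * sqnorm y.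
  have := qform_cross_ge0 (l%:C *: x) (- t *: y).
  have l2 : Re (l%:C * conjc l%:C) = l ^+ 2 by rewrite ReM ReJ ImJ /=; ring.
  have t1 : Re (- t * conjc (- t)) = 1 by rewrite rmorphN mulrNN tJt.
  rewrite !sqnormZ l2 t1 -scalemxAr cinnerZl cinnerZr rmorphN mulNr tz mulrN ReN ReM /=.
  lra.
have a_ge0 : 0 <= (1 + s ^+ 2) * w * sqnorm x.
  by rewrite !mulr_ge0 ?addr_ge0 ?sqr_ge0 ?sqnorm_ge0.
have m2 := quadratic_ge0_discr a_ge0 quad.
rewrite -ler_sqr ?nnegrE ?cabs_ge0 ?mulr_ge0 ?sqrtr_ge0 //.
rewrite !exprMn !sqr_sqrtr ?sqnorm_ge0 ?addr_ge0 ?sqr_ge0 //.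
lra.
Qed.

End SectorialForm.

(* The hypothesis [0 <= b] covers the empty set, whose [sup] is [0]. *)
Lemma sup_le_ge0 (R : realType) (E : set R) (b : R) :
  0 <= b -> (forall r, E r -> r <= b) -> sup E <= b.
Proof.
move=> b_ge0 Eb; have [->|/set0P E0] := eqVneq E set0; first by rewrite sup0.
exact: ge_sup.
Qed.

Section NumericalRadius.
Variables (R : realType) (n : nat) (A : 'M[R[i]]_n).
Local Notation Re := complex.Re.
Local Notation Im := complex.Im.
Local Notation f := (qform A).

Lemma qform_unit_le_entries x : unit_vec x -> cabs (f x) <= \sum_i \sum_j cabs (A i j).
Proof.
move=> ux; have x_le1 i : `|x i 0| <= 1.
  rewrite -(@expr_le1 _ 2) // sqr_normc -[X in _ <= X]ux /cinner.
  by rewrite (bigD1 i) //= lerDl sumr_ge0 // => j _; apply: mulcJ_ge0.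
suff : `|f x| <= (\sum_i \sum_j cabs (A i j))%:C by rewrite -lecR.
rewrite rmorph_sum /qform /cinner.
apply: le_trans (ler_norm_sum _ _ _) _; apply: ler_sum => i _.
rewrite normrM mxE rmorph_sum -[X in _ <= X]mulr1.
apply: ler_pM => //; last by rewrite normcJ.
apply: le_trans (ler_norm_sum _ _ _) _; apply: ler_sum => j _.
by rewrite normrM -[X in _ <= X]mulr1; apply: ler_pM.
Qed.

Lemma qform_unit_le_numradius x : unit_vec x -> cabs (f x) <= numradius A.
Proof.
move=> ux; have bounded : has_ubound [set r | exists2 z, numrange A z & r = cabs z].
  exists (\sum_i \sum_j cabs (A i j)) => _ [_ [y [uy ->]] ->].
  exact: qform_unit_le_entries.
by apply: (ub_le_sup bounded); exists (f x) => //; exists x.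
Qed.

Lemma numradius_ge0 : 0 <= numradius A.
Proof.
have [[x ux]|no_unit] := pselect (exists x : 'cV[R[i]]_n, unit_vec x).
  exact: le_trans (cabs_ge0 _) (qform_unit_le_numradius ux).
rewrite /numradius (_ : [set _ | _] = set0) ?sup0 //.
by apply/seteqP; split => // r [_ [x [ux _]] _]; apply: no_unit; exists x.
Qed.

Lemma qform_le_numradius v : cabs (f v) <= numradius A * sqnorm v.
Proof.
have [->|[x ux ->]] := qform_normalize A v.
  by rewrite qform0 /cabs ComplexField.Normc.normc0 mulr_ge0 ?numradius_ge0 ?sqnorm_ge0.
rewrite cabs_realM ger0_norm ?sqnorm_ge0 // mulrC.
by rewrite ler_wpM2r ?sqnorm_ge0 ?qform_unit_le_numradius.
Qed.

Lemma sectorial_qform alpha : sectorial alpha A -> 0 < cos alpha ->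
  forall v, 0 <= Re (f v) /\ cos alpha * `|Im (f v)| <= sin alpha * Re (f v).
Proof.
move=> secA c_gt0 v; have [->|[x ux ->]] := qform_normalize A v.
  by rewrite qform0 normr0 mulr0 mulr0.
have [Re_gt0 Im_le] : sector alpha (f x) by apply: secA; exists x.
rewrite Re_realM Im_realM normrM ger0_norm ?sqnorm_ge0 // mulrCA [_ * (_ * Re _)]mulrCA.
split; first by rewrite mulr_ge0 ?sqnorm_ge0 ?ltW.
apply: ler_wpM2l; first exact: sqnorm_ge0.
have -> : sin alpha = cos alpha * tan alpha by rewrite mulrC divfK ?lt0r_neq0.
by rewrite -mulrA; apply: ler_wpM2l; [exact: ltW | exact: Im_le].
Qed.

End NumericalRadius.

Lemma sectorial_cinner_le (R : realType) (n : nat) (alpha : R) (A : 'M[R[i]]_n) :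
  0 <= alpha -> alpha < pi / 2 -> sectorial alpha A ->
  forall x y, cabs (cinner (A *m x) y) <=
    Num.sqrt (1 + sin alpha ^+ 2) * numradius A * Num.sqrt (sqnorm x) * Num.sqrt (sqnorm y).
Proof.
move=> a_ge0 a_lt secA; have pi_gt0 := @pi_gt0 R.
have c_gt0 : 0 < cos alpha by apply: cos_gt0_pihalf; apply/andP; split; lra.
have s_ge0 : 0 <= sin alpha by apply: sin_ge0_pi; apply/andP; split; lra.
have sc1 : sin alpha ^+ 2 + cos alpha ^+ 2 = 1 by rewrite addrC cos2Dsin2.
exact: (cinner_le_sqnorms s_ge0 c_gt0 sc1 (sectorial_qform secA c_gt0)
  (@qform_le_numradius _ _ A) (numradius_ge0 A)).
Qed.

Theorem theorem2p14 (R : realType) (n : nat) (alpha : R) (A : 'M[R[i]]_n) (q : R[i]) :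
  0 <= alpha -> alpha < pi / 2 ->
  sectorial alpha A ->
  cabs q <= 1 ->
  qnumradius q A <=
    (Num.sqrt ((1 - cabs q ^+ 2) * (1 + 2 * sin alpha ^+ 2)) + cabs q) * numradius A
  /\
  qnumradius q A <= Num.sqrt (1 + sin alpha ^+ 2) * numradius A.
Proof.
move=> a_ge0 a_lt secA q_le1; have bound := sectorial_cinner_le a_ge0 a_lt secA.
have w_ge0 := numradius_ge0 A; have q_ge0 := cabs_ge0 q.
split; apply: sup_le_ge0 => [|_ [x [y [ux uy xy ->]]]].
- by rewrite mulr_ge0 ?addr_ge0 ?sqrtr_ge0.
- have rest := bound x (y - conjc (cinner x y) *: x).
  rewrite sqnorm_sub_proj // xy !unit_vec_sqnorm // sqrtr1 mulr1 in rest.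
  rewrite cinner_split xy; apply: le_trans (le_normcD _ _) _.
  rewrite ComplexField.Normc.normcM mulrDl [X in _ <= X]addrC.
  apply: lerD; first by apply: ler_wpM2l => //; apply: qform_unit_le_numradius.
  apply: le_trans rest _; rewrite mulrAC -sqrtrM ?addr_ge0 ?sqr_ge0 //.
  apply: ler_wpM2r => //; apply: ler_wsqrtr.
  have q2_le1 : cabs q ^+ 2 <= 1 by rewrite expr_le1.
  by rewrite mulrC ler_wpM2l ?subr_ge0 // lerD2l ler_peMl ?sqr_ge0 ?ler1n.
- by rewrite mulr_ge0 ?sqrtr_ge0.
- by have := bound x y; rewrite !unit_vec_sqnorm // sqrtr1 !mulr1.
Qed.
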